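(* Let $f\in C([0,1])$. Then $f\in\mathcal{F}_0$ if and only if there exist real numbers $\alpha_h$, $h\in\mathbf{Z}$, such that $$f(t)=\alpha_0t+\lim_{N\to+\infty}\sum_{1\le|h|\le N}\alpha_h\frac{e(ht)-1}{2i\pi h}\Bigl(1-\frac{|h|}{N}\Bigr)$$ uniformly for $t\in[0,1]$. For $f\in\mathcal{F}_0$, this expansion holds if and only if $\alpha_0=f(1)$ and $\alpha_h=f(1)+2i\pi h\widehat f(h)$ for $h\neq0$, where $\widehat f(h)=\int_0^1f(t)e(-ht)\,dt$. Moreover, for $f\in\mathcal{F}_0$ with these coefficients, $f\in\mathcal{S}$ if and only if $|\alpha_h|\le2$ for all $h\in\mathbf{Z}$.
   Context: $e(z)=e^{2i\pi z}$. $C([0,1])$ is the space of continuous complex-valued functions on $[0,1]$ with the sup norm. $\mathcal{F}_0$ is the real vector space of all $f\in C([0,1])$ such that $f(t)+\overline{f(1-t)}=f(1)$ for all $t\in[0,1]$. $\mathcal{S}$ is the support in $C([0,1])$ of the law of the random series $\mathrm{K}(t)=t\,\mathrm{ST}_0+\sum_{h\neq0}\frac{e(ht)-1}{2\pi i h}\mathrm{ST}_h$, where $(\mathrm{ST}_h)_{h\in\mathbf{Z}}$ are independent with Sato–Tate law $\frac1\pi\sqrt{1-x^2/4}\,dx$ on $[-2,2]$ (almost surely uniformly convergent via symmetric partial sums); equivalently, $\mathcal{S}$ is the set of $f\in C([0,1])$ with $f(0)=0$, $f(1)\in[-2,2]$, and such that $g(t)=f(t)-tf(1)$ has $\widehat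 g(h)\in i\mathbf{R}$ and $|\widehat g(h)|\le1/(\pi|h|)$ for all $h\ne0$. *)

From Stdlib Require Import Reals ZArith.
From Coquelicot Require Import Coquelicot.

Open Scope R_scope.

Definition e (x : R) : C := (cos (2 * PI * x), sin (2 * PI * x)).

Definition I01 (t : R) : Prop := 0 <= t <= 1.

(* f : R -> C represents an element of C([0,1]); only its values on [0,1] matter. *)
Definition cont01 (f : R -> C) : Prop :=
  forall t, I01 t -> filterlim f (within I01 (locally t)) (locally (f t)).

Definition inF0 (f : R -> C) : Prop :=
  forall t, I01 t -> (f t + Cconj (f (1 - t)%R))%C = f 1.

Definition fhat (f : R -> C) (h : Z) : C :=
  @RInt C_R_CompleteNormedModule (fun t => (f t * e (- IZR h * t))%C) 0 1.

Definition kterm (alpha : Z -> R) (h : Z) (t : R) : C :=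
  (RtoC (alpha h) * ((e (IZR h * t) - RtoC 1) / (RtoC 2 * Ci * RtoC PI * RtoC (IZR h))))%C.

Fixpoint fejer_sum (alpha : Z -> R) (N : nat) (M : nat) (t : R) : C :=
  match M with
  | O => RtoC 0
  | S k => (fejer_sum alpha N k t
            + RtoC (1 - INR (S k) / INR N)
              * (kterm alpha (Z.of_nat (S k)) t + kterm alpha (- Z.of_nat (S k))%Z t))%C
  end.

Definition fejer (alpha : Z -> R) (N : nat) (t : R) : C :=
  (RtoC (alpha 0%Z * t) + fejer_sum alpha N N t)%C.

Definition expansion (f : R -> C) (alpha : Z -> R) : Prop :=
  forall eps : R, 0 < eps -> exists N0 : nat, forall N : nat, (N0 <= N)%nat ->
    forall t, I01 t -> Cmod (f t - fejer alpha N t)%C < eps.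

(* The set S, via the characterization given in the context:
   f(0)=0, f(1) in [-2,2], and g(t) = f(t) - t f(1) has \hat g(h) in iR with
   |\hat g(h)| <= 1/(pi |h|) for h <> 0. *)
Definition inS (f : R -> C) : Prop :=
  cont01 f /\ f 0 = RtoC 0 /\ Im (f 1) = 0 /\ -2 <= Re (f 1) <= 2 /\
  forall h : Z, h <> 0%Z ->
    let g := fun t : R => (f t - RtoC t * f 1)%C in
    Re (fhat g h) = 0 /\ Cmod (fhat g h) <= 1 / (PI * Rabs (IZR h)).

From Stdlib Require Import Reals ZArith Lra Lia.
From Coquelicot Require Import Coquelicot.
Open Scope R_scope.

(* Write g(t) = f(t) - t f(1).  For f in F_0, the real and imaginary parts of g vanish at 0 and 1
   and are respectively odd and even under t |-> 1 - t, so the cosine coefficients of Re g and the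
   sine coefficients of Im g vanish.  With alpha_h = f(1) + 2 i pi h fhat(h) = 2 i pi h ghat(h), the
   real and imaginary parts of the N-th sum of the expansion are then exactly
   alpha_0 t + sigma_N(t) - sigma_N(0), where sigma_N is the Fejer (Cesaro) mean of Re g, resp. Im g,
   and Fejer's theorem gives the uniform convergence.  Conversely every sum F_N of the expansion
   satisfies F_N(t) + conj F_N(1 - t) = F_N(1), which passes to the uniform limit, and integrating
   F_N against sin(2 pi m t) and cos(2 pi m t) recovers alpha_m and alpha_(-m), so the coefficients
   are unique.  Finally ghat(h) = - i alpha_h / (2 pi h), which turns the bound
   |ghat(h)| <= 1 / (pi |h|) defining S into |alpha_h| <= 2. *)

(** * Trigonometry and integrals on [0,1] *)

Lemma cos_sin_2PI_INR (n : nat) : cos (2 * PI * INR n) = 1 /\ sin (2 * PI * INR n) = 0.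
Proof.
  replace (2 * PI * INR n) with (0 + 2 * INR n * PI) by ring.
  rewrite cos_period, sin_period, cos_0, sin_0. split; reflexivity.
Qed.

Lemma cos_sin_2PI_IZR (k : Z) : cos (2 * PI * IZR k) = 1 /\ sin (2 * PI * IZR k) = 0.
Proof.
  assert (Hk : IZR k = INR (Z.abs_nat k) \/ IZR k = - INR (Z.abs_nat k)).
  { rewrite INR_IZR_INZ, Zabs2Nat.id_abs.
    destruct (Z.abs_spec k) as [[_ ->] | [_ ->]]; [left | right; rewrite opp_IZR, Ropp_involutive];
      reflexivity. }
  destruct (cos_sin_2PI_INR (Z.abs_nat k)) as [Hc Hs].
  destruct Hk as [-> | ->]; [split; assumption |].
  rewrite Ropp_mult_distr_r_reverse, cos_neg, sin_neg, Hc, Hs. split; [reflexivity | apply Ropp_0].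
Qed.

Lemma cos_2PI_IZR_sub (k : Z) (x : R) : cos (2 * PI * IZR k - x) = cos x.
Proof. destruct (cos_sin_2PI_IZR k) as [Hc Hs]. rewrite cos_minus, Hc, Hs. ring. Qed.

Lemma sin_2PI_IZR_sub (k : Z) (x : R) : sin (2 * PI * IZR k - x) = - sin x.
Proof. destruct (cos_sin_2PI_IZR k) as [Hc Hs]. rewrite sin_minus, Hc, Hs. ring. Qed.

Lemma two_PI_IZR_neq0 (k : Z) : k <> 0%Z -> 2 * PI * IZR k <> 0.
Proof.
  intros Hk. pose proof PI_RGT_0. apply eq_IZR_contrapositive in Hk.
  apply Rmult_integral_contrapositive_currified; lra.
Qed.

(* Coquelicot states its integral and sum lemmas with the abstract [plus], [scal] and carrier of a
   normed module; the following instances over [R] can be used by [rewrite], [ring] and [lra].  For the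
   same reason, an equation whose left-hand side is a [sum_n_m] is stated with [:> R]. *)
Lemma is_RInt_Rplus (f g : R -> R) (a b lf lg : R) :
  is_RInt f a b lf -> is_RInt g a b lg -> is_RInt (fun x => f x + g x) a b (lf + lg).
Proof. apply (is_RInt_plus (V := R_NormedModule)). Qed.

Lemma is_RInt_Rminus (f g : R -> R) (a b lf lg : R) :
  is_RInt f a b lf -> is_RInt g a b lg -> is_RInt (fun x => f x - g x) a b (lf - lg).
Proof. apply (is_RInt_minus (V := R_NormedModule)). Qed.

Lemma is_RInt_Rscal (f : R -> R) (a b c l : R) :
  is_RInt f a b l -> is_RInt (fun x => c * f x) a b (c * l).
Proof. apply (is_RInt_scal (V := R_NormedModule)). Qed.

Lemma is_RInt_Rconst (c a b : R) : is_RInt (fun _ => c) a b ((b - a) * c).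
Proof. apply (is_RInt_const (V := R_NormedModule)). Qed.

Lemma is_RInt_congr (f g : R -> R) (a b l l' : R) :
  is_RInt f a b l -> (forall x, Rmin a b < x < Rmax a b -> f x = g x) -> l = l' -> is_RInt g a b l'.
Proof. intros H E <-. exact (is_RInt_ext f g a b l E H). Qed.

Lemma sum_n_m_Rsucc (a : nat -> R) (n m : nat) :
  (n <= S m)%nat -> sum_n_m a n (S m) = sum_n_m a n m + a (S m).
Proof. apply (sum_n_Sm (G := R_AbelianMonoid)). Qed.

Lemma sum_n_m_Rempty (a : nat -> R) (n m : nat) : (m < n)%nat -> sum_n_m a n m = 0.
Proof. apply (sum_n_m_zero (G := R_AbelianMonoid)). Qed.

Lemma sum_n_m_Rext (a b : nat -> R) (n m : nat) :
  (forall k, (n <= k <= m)%nat -> a k = b k) -> sum_n_m a n m = sum_n_m b n m.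
Proof. apply (sum_n_m_ext_loc (G := R_AbelianMonoid)). Qed.

Lemma sum_n_m_Rplus (a b : nat -> R) (n m : nat) :
  sum_n_m (fun k => a k + b k) n m = sum_n_m a n m + sum_n_m b n m.
Proof. apply (sum_n_m_plus (G := R_AbelianMonoid)). Qed.

Lemma sum_n_m_Rmult_l (c : R) (a : nat -> R) (n m : nat) :
  sum_n_m (fun k => c * a k) n m = c * sum_n_m a n m.
Proof. apply (sum_n_m_mult_l (K := R_Ring)). Qed.

Lemma is_RInt_sum_n_m (g : nat -> R -> R) (l : nat -> R) (a b : R) (n m : nat) :
  (forall j, (n <= j <= m)%nat -> is_RInt (g j) a b (l j)) ->
  is_RInt (fun x => sum_n_m (fun j => g j x) n m) a b (sum_n_m l n m).
Proof.
  intros Hg. destruct (le_lt_dec n m) as [Hnm | Hmn].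
  - induction Hnm as [| m Hnm IH].
    + rewrite sum_n_n. apply (is_RInt_ext (g n)); [intros x _; now rewrite sum_n_n |].
      apply Hg. lia.
    + rewrite sum_n_Sm by lia.
      apply (is_RInt_ext (fun x => sum_n_m (fun j => g j x) n m + g (S m) x));
        [intros x _; now rewrite sum_n_Sm by lia |].
      apply is_RInt_Rplus; [apply IH | apply Hg]; intros; try apply Hg; lia.
  - rewrite sum_n_m_zero by exact Hmn.
    apply (is_RInt_ext (fun _ => 0)); [intros x _; now rewrite sum_n_m_zero |].
    apply (is_RInt_congr _ _ _ _ _ _ (is_RInt_Rconst 0 a b)); [reflexivity | apply Rmult_0_r].
Qed.

Lemma is_RInt_of_continuous (f : R -> R) (a b : R) :
  (forall x, continuous f x) -> is_RInt f a b (RInt f a b).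
Proof. intros Hf. apply (RInt_correct (V := R_CompleteNormedModule)), ex_RInt_continuous. auto. Qed.

Lemma is_RInt_antiderivative (F f : R -> R) (a b : R) :
  (forall x, is_derive F x (f x)) -> (forall x, continuous f x) -> is_RInt f a b (F b - F a).
Proof. intros HF Hf. apply (is_RInt_derive (V := R_CompleteNormedModule)); auto. Qed.

Lemma is_RInt_reflect01 (f : R -> R) (l : R) :
  is_RInt f 0 1 l -> is_RInt (fun t => f (1 - t)) 0 1 l.
Proof.
  intros H.
  assert (H' : is_RInt f (-1 * 0 + 1) (-1 * 1 + 1) (- l)).
  { replace (-1 * 0 + 1) with 1 by ring. replace (-1 * 1 + 1) with 0 by ring.
    exact (is_RInt_swap (V := R_NormedModule) _ _ _ _ H). }
  apply is_RInt_comp_lin, (is_RInt_opp (V := R_NormedModule)) in H'.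
  apply (is_RInt_congr _ _ _ _ _ _ H'); [| apply Ropp_involutive].
  intros t _. change (- (-1 * f (-1 * t + 1)) = f (1 - t)).
  replace (-1 * t + 1) with (1 - t) by ring. ring.
Qed.

Lemma is_RInt_reflect01_odd (g : R -> R) (l : R) :
  is_RInt g 0 1 l -> (forall t, I01 t -> g (1 - t) = - g t) -> l = 0.
Proof.
  intros H Hodd.
  assert (Hneg : is_RInt (fun t => -1 * g t) 0 1 l).
  { apply (is_RInt_congr _ _ _ _ _ _ (is_RInt_reflect01 _ _ H)); [| reflexivity].
    intros t Ht. rewrite Rmin_left, Rmax_right in Ht by lra. rewrite Hodd by (unfold I01; lra). ring. }
  apply (is_RInt_Rscal _ _ _ (-1)) in H.
  apply (is_RInt_unique (V := R_CompleteNormedModule)) in H, Hneg. lra.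
Qed.

Lemma is_RInt_cos_2PI (k : Z) :
  is_RInt (fun t => cos (2 * PI * IZR k * t)) 0 1 (if Z.eqb k 0 then 1 else 0).
Proof.
  destruct (Z.eqb_spec k 0) as [-> | Hk].
  - apply (is_RInt_congr _ _ _ _ _ _ (is_RInt_Rconst 1 0 1)); [| ring].
    intros t _. rewrite Rmult_0_r, Rmult_0_l, cos_0. reflexivity.
  - pose proof (cos_sin_2PI_IZR k) as [_ S]. pose proof (two_PI_IZR_neq0 k Hk) as Hc.
    set (c := 2 * PI * IZR k) in *. eapply is_RInt_congr.
    + apply (is_RInt_antiderivative (fun t => sin (c * t) / c) (fun t => cos (c * t))).
      * intros x. auto_derive; [easy | field; exact Hc].
      * intros x. apply (ex_derive_continuous (V := R_NormedModule)). auto_derive. easy.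
    + reflexivity.
    + rewrite Rmult_1_r, Rmult_0_r, sin_0, S. field. exact Hc.
Qed.

Lemma is_RInt_sin_2PI (k : Z) : is_RInt (fun t => sin (2 * PI * IZR k * t)) 0 1 0.
Proof.
  destruct (Z.eq_dec k 0) as [-> | Hk].
  - apply (is_RInt_congr _ _ _ _ _ _ (is_RInt_Rconst 0 0 1)); [| ring].
    intros t _. rewrite Rmult_0_r, Rmult_0_l, sin_0. reflexivity.
  - pose proof (cos_sin_2PI_IZR k) as [C _]. pose proof (two_PI_IZR_neq0 k Hk) as Hc.
    set (c := 2 * PI * IZR k) in *. eapply is_RInt_congr.
    + apply (is_RInt_antiderivative (fun t => - cos (c * t) / c) (fun t => sin (c * t))).
      * intros x. auto_derive; [easy | field; exact Hc].
      * intros x. apply (ex_derive_continuous (V := R_NormedModule)). auto_derive. easy.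
    + reflexivity.
    + rewrite Rmult_1_r, Rmult_0_r, cos_0, C. field. exact Hc.
Qed.

Lemma is_RInt_id_cos_2PI (k : Z) : k <> 0%Z ->
  is_RInt (fun t => t * cos (2 * PI * IZR k * t)) 0 1 0.
Proof.
  intros Hk. pose proof (cos_sin_2PI_IZR k) as [C S]. pose proof (two_PI_IZR_neq0 k Hk) as Hc.
  set (c := 2 * PI * IZR k) in *. eapply is_RInt_congr.
  - apply (is_RInt_antiderivative (fun t => t * sin (c * t) / c + cos (c * t) / c ^ 2)
                                  (fun t => t * cos (c * t))).
    + intros x. auto_derive; [easy | field; exact Hc].
    + intros x. apply (ex_derive_continuous (V := R_NormedModule)). auto_derive. easy.
  - reflexivity.
  - rewrite !Rmult_1_r, !Rmult_0_r, cos_0, sin_0, C, S. field. exact Hc.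
Qed.

Lemma is_RInt_id_sin_2PI (k : Z) : k <> 0%Z ->
  is_RInt (fun t => t * sin (2 * PI * IZR k * t)) 0 1 (- / (2 * PI * IZR k)).
Proof.
  intros Hk. pose proof (cos_sin_2PI_IZR k) as [C S]. pose proof (two_PI_IZR_neq0 k Hk) as Hc.
  set (c := 2 * PI * IZR k) in *. eapply is_RInt_congr.
  - apply (is_RInt_antiderivative (fun t => - t * cos (c * t) / c + sin (c * t) / c ^ 2)
                                  (fun t => t * sin (c * t))).
    + intros x. auto_derive; [easy | field; exact Hc].
    + intros x. apply (ex_derive_continuous (V := R_NormedModule)). auto_derive. easy.
  - reflexivity.
  - rewrite !Rmult_1_r, !Rmult_0_r, sin_0, C, S. field. exact Hc.
Qed.

Lemma is_RInt_sin_sin_2PI (j m : nat) : (1 <= j)%nat -> (1 <= m)%nat ->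
  is_RInt (fun t => sin (2 * PI * INR j * t) * sin (2 * PI * INR m * t)) 0 1
    (if Nat.eqb j m then 1 / 2 else 0).
Proof.
  intros Hj Hm.
  pose proof (is_RInt_cos_2PI (Z.of_nat j - Z.of_nat m)) as Hd.
  pose proof (is_RInt_cos_2PI (Z.of_nat j + Z.of_nat m)) as Hs.
  apply (is_RInt_congr _ _ _ _ _ _ (is_RInt_Rscal _ _ _ (1 / 2) _ (is_RInt_Rminus _ _ _ _ _ _ Hd Hs))).
  - intros t _. rewrite minus_IZR, plus_IZR, <- !INR_IZR_INZ.
    replace (2 * PI * (INR j - INR m) * t) with (2 * PI * INR j * t - 2 * PI * INR m * t) by ring.
    replace (2 * PI * (INR j + INR m) * t) with (2 * PI * INR j * t + 2 * PI * INR m * t) by ring.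
    rewrite cos_minus, cos_plus. field.
  - destruct (Nat.eqb_spec j m); destruct (Z.eqb_spec (Z.of_nat j - Z.of_nat m) 0);
      destruct (Z.eqb_spec (Z.of_nat j + Z.of_nat m) 0); try lia; field.
Qed.

Lemma is_RInt_versin_cos_2PI (j m : nat) : (1 <= j)%nat -> (1 <= m)%nat ->
  is_RInt (fun t => (1 - cos (2 * PI * INR j * t)) * cos (2 * PI * INR m * t)) 0 1
    (if Nat.eqb j m then - (1 / 2) else 0).
Proof.
  intros Hj Hm.
  pose proof (is_RInt_cos_2PI (Z.of_nat m)) as H0.
  pose proof (is_RInt_cos_2PI (Z.of_nat j - Z.of_nat m)) as Hd.
  pose proof (is_RInt_cos_2PI (Z.of_nat j + Z.of_nat m)) as Hs.
  apply (is_RInt_congr _ _ _ _ _ _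
    (is_RInt_Rminus _ _ _ _ _ _ H0 (is_RInt_Rscal _ _ _ (1 / 2) _ (is_RInt_Rplus _ _ _ _ _ _ Hd Hs)))).
  - intros t _. rewrite minus_IZR, plus_IZR, <- !INR_IZR_INZ.
    replace (2 * PI * (INR j - INR m) * t) with (2 * PI * INR j * t - 2 * PI * INR m * t) by ring.
    replace (2 * PI * (INR j + INR m) * t) with (2 * PI * INR j * t + 2 * PI * INR m * t) by ring.
    rewrite cos_minus, cos_plus. field.
  - destruct (Nat.eqb_spec j m); destruct (Z.eqb_spec (Z.of_nat m) 0);
      destruct (Z.eqb_spec (Z.of_nat j - Z.of_nat m) 0);
      destruct (Z.eqb_spec (Z.of_nat j + Z.of_nat m) 0); try lia; field.
Qed.

(** * The Fejer kernel *)

(* [N] times the usual Fejer kernel: [sum_(|m| < N) (N - |m|) e^(i m x)]. *)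
Definition fejer_kernel (N : nat) (x : R) : R :=
  INR N + 2 * sum_n_m (fun m => (INR N - INR m) * cos (INR m * x)) 1 N.

Lemma dirichlet_mul_versin (N : nat) (x : R) :
  (1 + 2 * sum_n_m (fun m => cos (INR m * x)) 1 N) * (1 - cos x) = cos (INR N * x) - cos (INR (S N) * x).
Proof.
  induction N as [| N IH].
  - rewrite sum_n_m_Rempty by lia. change (INR 0) with 0. change (INR 1) with 1.
    rewrite Rmult_0_l, Rmult_1_l, cos_0. ring.
  - rewrite sum_n_m_Rsucc by lia.
    replace (INR N * x) with (INR (S N) * x - x) in IH by (rewrite !S_INR; ring).
    replace (INR (S (S N)) * x) with (INR (S N) * x + x) by (rewrite !S_INR; ring).
    rewrite cos_minus in IH. rewrite cos_plus. nra.
Qed.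

Lemma fejer_kernel_S (N : nat) (x : R) :
  fejer_kernel (S N) x = fejer_kernel N x + (1 + 2 * sum_n_m (fun m => cos (INR m * x)) 1 N).
Proof.
  unfold fejer_kernel. rewrite sum_n_m_Rsucc by lia.
  rewrite (sum_n_m_Rext _ (fun m => (INR N - INR m) * cos (INR m * x) + cos (INR m * x)))
    by (intros m _; rewrite S_INR; ring).
  rewrite sum_n_m_Rplus, S_INR. ring.
Qed.

Lemma fejer_kernel_mul_versin (N : nat) (x : R) :
  fejer_kernel N x * (1 - cos x) = 1 - cos (INR N * x).
Proof.
  induction N as [| N IH].
  - unfold fejer_kernel. rewrite sum_n_m_Rempty by lia. simpl. rewrite Rmult_0_l, cos_0. ring.
  - rewrite fejer_kernel_S, Rmult_plus_distr_r, IH, dirichlet_mul_versin. ring.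
Qed.

Lemma cos_INR_mul_of_cos_1 (m : nat) (x : R) : cos x = 1 -> cos (INR m * x) = 1.
Proof.
  intros C1. assert (S0 : sin x = 0) by (pose proof (sin2_cos2 x); unfold Rsqr in *; nra).
  induction m as [| m IH].
  - rewrite Rmult_0_l. apply cos_0.
  - rewrite S_INR, Rmult_plus_distr_r, Rmult_1_l, cos_plus, IH, C1, S0. ring.
Qed.

Lemma fejer_kernel_of_cos_1 (N : nat) (x : R) : cos x = 1 -> fejer_kernel N x = INR N ^ 2.
Proof.
  intros C1. induction N as [| N IH].
  - unfold fejer_kernel. rewrite sum_n_m_Rempty by lia. simpl. ring.
  - rewrite fejer_kernel_S, IH.
    rewrite (sum_n_m_Rext _ (fun _ => 1)) by (intros m _; apply cos_INR_mul_of_cos_1, C1).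
    rewrite sum_n_m_const, S_INR, Nat.sub_1_r. simpl pred. ring.
Qed.

Lemma fejer_kernel_nonneg (N : nat) (x : R) : 0 <= fejer_kernel N x.
Proof.
  destruct (Req_dec (cos x) 1) as [C1 | C1].
  - rewrite fejer_kernel_of_cos_1 by exact C1. apply pow2_ge_0.
  - pose proof (COS_bound x). pose proof (COS_bound (INR N * x)).
    pose proof (fejer_kernel_mul_versin N x). nra.
Qed.

Lemma fejer_kernel_mul_versin_le (N : nat) (x : R) : fejer_kernel N x * (1 - cos x) <= 2.
Proof. rewrite fejer_kernel_mul_versin. pose proof (COS_bound (INR N * x)). lra. Qed.

Lemma cos_2PI_le_of_dist (d u : R) :
  0 < d <= 1 / 2 -> d <= Rabs u <= 1 - d -> cos (2 * PI * u) <= cos (2 * PI * d).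
Proof.
  intros Hd Hu. pose proof PI_RGT_0.
  assert (Hmono : forall v, d <= v <= 1 / 2 -> cos (2 * PI * v) <= cos (2 * PI * d)).
  { intros v Hv. destruct (Req_dec v d) as [-> | Hvd]; [lra |].
    left. apply cos_decreasing_1; nra. }
  assert (Habs : cos (2 * PI * u) = cos (2 * PI * Rabs u)).
  { unfold Rabs. destruct (Rcase_abs u); [| reflexivity].
    rewrite <- cos_neg. f_equal. ring. }
  rewrite Habs. destruct (Rle_dec (Rabs u) (1 / 2)); [apply Hmono; lra |].
  rewrite <- (cos_2PI_IZR_sub 1). replace (2 * PI * IZR 1 - 2 * PI * Rabs u) with (2 * PI * (1 - Rabs u)) by ring.
  apply Hmono. lra.
Qed.

Lemma versin_2PI_pos (d : R) : 0 < d <= 1 / 2 -> 0 < 1 - cos (2 * PI * d).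
Proof.
  intros Hd. pose proof PI_RGT_0. rewrite <- cos_0 at 1.
  apply Rlt_0_minus, cos_decreasing_1; nra.
Qed.

Lemma fejer_kernel_far (N : nat) (d u : R) : 0 < d <= 1 / 2 -> d <= Rabs u <= 1 - d ->
  fejer_kernel N (2 * PI * u) * (1 - cos (2 * PI * d)) <= 2.
Proof.
  intros Hd Hu. pose proof (cos_2PI_le_of_dist d u Hd Hu).
  pose proof (fejer_kernel_nonneg N (2 * PI * u)). pose proof (fejer_kernel_mul_versin_le N (2 * PI * u)).
  nra.
Qed.

(** * Fejer's theorem *)

Definition cos_coef (phi : R -> R) (x : R) : R := RInt (fun t => phi t * cos (2 * PI * x * t)) 0 1.

Definition sin_coef (phi : R -> R) (x : R) : R := RInt (fun t => phi t * sin (2 * PI * x * t)) 0 1.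

Definition fejer_weight (N m : nat) : R := 1 - INR m / INR N.

Definition fejer_mean (phi : R -> R) (N : nat) (t : R) : R :=
  cos_coef phi 0 + sum_n_m (fun m => fejer_weight N m *
    (2 * (cos_coef phi (INR m) * cos (2 * PI * INR m * t)
          + sin_coef phi (INR m) * sin (2 * PI * INR m * t)))) 1 N.

Section FourierCoefficients.

Variable phi : R -> R.
Hypothesis phi_cont : forall x, continuous phi x.

Lemma is_RInt_cos_coef (x : R) :
  is_RInt (fun t => phi t * cos (2 * PI * x * t)) 0 1 (cos_coef phi x).
Proof.
  apply is_RInt_of_continuous. intros t.
  apply (continuous_mult (K := R_AbsRing)); [apply phi_cont |].
  apply continuous_cos_comp, (ex_derive_continuous (V := R_NormedModule)). auto_derive. easy.
Qed.

Lemma is_RInt_sin_coef (x : R) :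
  is_RInt (fun t => phi t * sin (2 * PI * x * t)) 0 1 (sin_coef phi x).
Proof.
  apply is_RInt_of_continuous. intros t.
  apply (continuous_mult (K := R_AbsRing)); [apply phi_cont |].
  apply (ex_derive_continuous (V := R_NormedModule)). auto_derive. easy.
Qed.

Lemma is_RInt_mul_cos_shift (x t : R) :
  is_RInt (fun s => phi s * cos (2 * PI * x * (t - s))) 0 1
    (cos_coef phi x * cos (2 * PI * x * t) + sin_coef phi x * sin (2 * PI * x * t)).
Proof.
  eapply is_RInt_congr.
  - exact (is_RInt_Rplus _ _ _ _ _ _ (is_RInt_Rscal _ _ _ (cos (2 * PI * x * t)) _ (is_RInt_cos_coef x))
                                     (is_RInt_Rscal _ _ _ (sin (2 * PI * x * t)) _ (is_RInt_sin_coef x))).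
  - intros s _. replace (2 * PI * x * (t - s)) with (2 * PI * x * t - 2 * PI * x * s) by ring.
    rewrite cos_minus. ring.
  - ring.
Qed.

Lemma is_RInt_fejer_convolution (N : nat) (t : R) : (1 <= N)%nat ->
  is_RInt (fun s => phi s * fejer_kernel N (2 * PI * (t - s))) 0 1 (INR N * fejer_mean phi N t).
Proof.
  intros HN. assert (HN0 : INR N <> 0) by (apply not_0_INR; lia).
  eapply is_RInt_congr.
  - eapply is_RInt_Rplus.
    + exact (is_RInt_Rscal _ _ _ (INR N) _ (is_RInt_mul_cos_shift 0 t)).
    + eapply (is_RInt_Rscal _ 0 1 2).
      eapply (is_RInt_sum_n_m (fun m s => (INR N - INR m) * (phi s * cos (2 * PI * INR m * (t - s))))
                             _ 0 1 1 N).
      intros m _. apply is_RInt_Rscal, is_RInt_mul_cos_shift.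
  - intros s _. unfold fejer_kernel.
    rewrite !Rmult_0_r, Rmult_0_l, cos_0, Rmult_plus_distr_l, <- !sum_n_m_Rmult_l.
    f_equal; [ring |]. apply sum_n_m_Rext. intros m _.
    replace (INR m * (2 * PI * (t - s))) with (2 * PI * INR m * (t - s)) by ring. ring.
  - unfold fejer_mean. rewrite !Rmult_0_r, Rmult_0_l, cos_0, sin_0.
    rewrite (Rmult_plus_distr_l (INR N) (cos_coef phi 0)), <- !sum_n_m_Rmult_l.
    f_equal; [ring |]. apply sum_n_m_Rext. intros m _. unfold fejer_weight. field. exact HN0.
Qed.

Lemma cos_coef_opp (x : R) : cos_coef phi (- x) = cos_coef phi x.
Proof.
  unfold cos_coef. apply (RInt_ext (V := R_CompleteNormedModule)). intros t _.
  rewrite <- cos_neg. f_equal. f_equal. ring.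
Qed.

Lemma sin_coef_opp (x : R) : sin_coef phi (- x) = - sin_coef phi x.
Proof.
  apply (is_RInt_unique (V := R_CompleteNormedModule)).
  eapply is_RInt_congr; [exact (is_RInt_Rscal _ _ _ (-1) _ (is_RInt_sin_coef x)) | | ring].
  intros t _. replace (2 * PI * - x * t) with (- (2 * PI * x * t)) by ring. rewrite sin_neg. ring.
Qed.

Lemma cos_coef_reflect_odd (k : Z) :
  (forall t, I01 t -> phi (1 - t) = - phi t) -> cos_coef phi (IZR k) = 0.
Proof.
  intros Hodd. apply (is_RInt_reflect01_odd _ _ (is_RInt_cos_coef (IZR k))).
  intros t Ht. rewrite Hodd by exact Ht.
  replace (2 * PI * IZR k * (1 - t)) with (2 * PI * IZR k - 2 * PI * IZR k * t) by ring.
  rewrite cos_2PI_IZR_sub. ring.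
Qed.

Lemma sin_coef_reflect_even (k : Z) :
  (forall t, I01 t -> phi (1 - t) = phi t) -> sin_coef phi (IZR k) = 0.
Proof.
  intros Heven. apply (is_RInt_reflect01_odd _ _ (is_RInt_sin_coef (IZR k))).
  intros t Ht. rewrite Heven by exact Ht.
  replace (2 * PI * IZR k * (1 - t)) with (2 * PI * IZR k - 2 * PI * IZR k * t) by ring.
  rewrite sin_2PI_IZR_sub. ring.
Qed.

Lemma cos_coef_sub_line (psi : R -> R) (c : R) (k : Z) : k <> 0%Z ->
  (forall t, psi t = phi t - c * t) -> cos_coef psi (IZR k) = cos_coef phi (IZR k).
Proof.
  intros Hk Hpsi. apply (is_RInt_unique (V := R_CompleteNormedModule)).
  eapply is_RInt_congr; [exact (is_RInt_Rminus _ _ _ _ _ _ (is_RInt_cos_coef (IZR k))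
                                  (is_RInt_Rscal _ _ _ c _ (is_RInt_id_cos_2PI k Hk))) | | ring].
  intros t _. rewrite Hpsi. ring.
Qed.

Lemma sin_coef_sub_line (psi : R -> R) (c : R) (k : Z) : k <> 0%Z ->
  (forall t, psi t = phi t - c * t) -> sin_coef psi (IZR k) = sin_coef phi (IZR k) + c / (2 * PI * IZR k).
Proof.
  intros Hk Hpsi. apply (is_RInt_unique (V := R_CompleteNormedModule)).
  eapply is_RInt_congr; [exact (is_RInt_Rminus _ _ _ _ _ _ (is_RInt_sin_coef (IZR k))
                                  (is_RInt_Rscal _ _ _ c _ (is_RInt_id_sin_2PI k Hk))) | | ].
  - intros t _. rewrite Hpsi. ring.
  - unfold Rdiv. ring.
Qed.

Lemma fejer_mean_sub_at_0 (N : nat) (t : R) :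
  fejer_mean phi N t - fejer_mean phi N 0 =
    sum_n_m (fun m => fejer_weight N m * (2 * (cos_coef phi (INR m) * (cos (2 * PI * INR m * t) - 1)
                                               + sin_coef phi (INR m) * sin (2 * PI * INR m * t)))) 1 N.
Proof.
  unfold fejer_mean.
  rewrite (sum_n_m_Rext
    (fun m => fejer_weight N m * (2 * (cos_coef phi (INR m) * (cos (2 * PI * INR m * t) - 1)
                                       + sin_coef phi (INR m) * sin (2 * PI * INR m * t))))
    (fun m => fejer_weight N m * (2 * (cos_coef phi (INR m) * cos (2 * PI * INR m * t)
                                       + sin_coef phi (INR m) * sin (2 * PI * INR m * t)))
              + -1 * (fejer_weight N m * (2 * (cos_coef phi (INR m) * cos (2 * PI * INR m * 0)
                                               + sin_coef phi (INR m) * sin (2 * PI * INR m * 0))))))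
    by (intros m _; rewrite Rmult_0_r, cos_0, sin_0; ring).
  rewrite sum_n_m_Rplus, sum_n_m_Rmult_l. ring.
Qed.

End FourierCoefficients.

Lemma fejer_mean_const_1 (N : nat) (t : R) : fejer_mean (fun _ => 1) N t = 1.
Proof.
  assert (Hcos0 : cos_coef (fun _ => 1) 0 = 1).
  { apply (is_RInt_unique (V := R_CompleteNormedModule)).
    apply (is_RInt_congr _ _ _ _ _ _ (is_RInt_cos_2PI 0)); [intros s _; ring | reflexivity]. }
  assert (Hcos : forall m : nat, (1 <= m)%nat -> cos_coef (fun _ => 1) (INR m) = 0).
  { intros m Hm. apply (is_RInt_unique (V := R_CompleteNormedModule)).
    apply (is_RInt_congr _ _ _ _ _ _ (is_RInt_cos_2PI (Z.of_nat m))).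
    - intros s _. rewrite <- INR_IZR_INZ. ring.
    - destruct (Z.eqb_spec (Z.of_nat m) 0); [lia | reflexivity]. }
  assert (Hsin : forall m : nat, sin_coef (fun _ => 1) (INR m) = 0).
  { intros m. apply (is_RInt_unique (V := R_CompleteNormedModule)).
    apply (is_RInt_congr _ _ _ _ _ _ (is_RInt_sin_2PI (Z.of_nat m))); [| reflexivity].
    intros s _. rewrite <- INR_IZR_INZ. ring. }
  unfold fejer_mean. rewrite Hcos0.
  rewrite (sum_n_m_Rext _ (fun _ => 0)) by (intros m Hm; rewrite Hcos, Hsin by lia; ring).
  rewrite sum_n_m_const. ring.
Qed.

Lemma is_RInt_fejer_kernel (N : nat) (t : R) : (1 <= N)%nat ->
  is_RInt (fun s => fejer_kernel N (2 * PI * (t - s))) 0 1 (INR N).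
Proof.
  intros HN. eapply is_RInt_congr.
  - apply (is_RInt_fejer_convolution (fun _ => 1)), HN. intros x. apply continuous_const.
  - intros s _. apply Rmult_1_l.
  - rewrite fejer_mean_const_1. apply Rmult_1_r.
Qed.

Section FejerError.

Variable phi : R -> R.
Hypothesis phi_cont : forall x, continuous phi x.
Hypothesis phi_periodic : phi 0 = phi 1.
Variables eta d M : R.
Hypothesis d_range : 0 < d <= 1 / 2.
Hypothesis phi_unif : forall x y, I01 x -> I01 y -> Rabs (x - y) < d -> Rabs (phi x - phi y) < eta.
Hypothesis phi_bound : forall x, I01 x -> Rabs (phi x) <= M.
Let c := 1 - cos (2 * PI * d).

Lemma eta_pos : 0 < eta.
Proof.
  assert (H0 : I01 0) by (unfold I01; lra).
  pose proof (phi_unif 0 0 H0 H0) as H. rewrite !Rminus_eq_0, Rabs_R0 in H. exact (H (proj1 d_range)).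
Qed.

(* [phi 0 = phi 1] makes [phi] uniformly continuous for the distance modulo 1. *)
Lemma phi_close_mod_1 (s t : R) : I01 s -> I01 t ->
  Rabs (t - s) < d \/ 1 - d < Rabs (t - s) -> Rabs (phi s - phi t) < 2 * eta.
Proof.
  unfold I01. intros Hs Ht [Hnear | Hwrap].
  - pose proof eta_pos.
    assert (Rabs (phi s - phi t) < eta) by (apply phi_unif; unfold I01; try lra; rewrite Rabs_minus_sym; exact Hnear).
    lra.
  - assert (H01 : forall a b, I01 a -> I01 b -> a < d -> 1 - d < b -> Rabs (phi a - phi b) < 2 * eta).
    { intros a b Ha Hb Hab Hbb. unfold I01 in *.
      replace (phi a - phi b) with ((phi a - phi 0) + (phi 1 - phi b)) by (rewrite phi_periodic; ring).
      eapply Rle_lt_trans; [apply Rabs_triang |].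
      assert (Rabs (phi a - phi 0) < eta) by (apply phi_unif; unfold I01; try lra; rewrite Rminus_0_r, Rabs_pos_eq; lra).
      assert (Rabs (phi 1 - phi b) < eta) by (apply phi_unif; unfold I01; try lra; rewrite Rabs_pos_eq; lra).
      lra. }
    unfold Rabs in Hwrap. destruct (Rcase_abs (t - s)).
    + rewrite Rabs_minus_sym. apply H01; unfold I01; lra.
    + apply H01; unfold I01; lra.
Qed.

Lemma fejer_integrand_bound (N : nat) (s t : R) : I01 s -> I01 t ->
  norm ((phi s - phi t) * fejer_kernel N (2 * PI * (t - s)))
    <= 2 * eta * fejer_kernel N (2 * PI * (t - s)) + 4 * M / c.
Proof.
  intros Hs Ht. pose proof (versin_2PI_pos d d_range) as Hc. fold c in Hc.
  set (K := fejer_kernel N (2 * PI * (t - s))).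
  assert (HK : 0 <= K) by apply fejer_kernel_nonneg.
  assert (HMc : 0 <= 4 * M / c).
  { pose proof (phi_bound s Hs). pose proof (Rabs_pos (phi s)).
    apply Rmult_le_pos; [lra | left; apply Rinv_0_lt_compat, Hc]. }
  change norm with Rabs. rewrite Rabs_mult, (Rabs_pos_eq K HK).
  destruct (Rlt_or_le (Rabs (t - s)) d) as [Hnear | Hfar1];
    [| destruct (Rlt_or_le (1 - d) (Rabs (t - s))) as [Hwrap | Hfar2]].
  - pose proof (phi_close_mod_1 s t Hs Ht (or_introl Hnear)). nra.
  - pose proof (phi_close_mod_1 s t Hs Ht (or_intror Hwrap)). nra.
  - assert (HKc : K <= 2 / c).
    { pose proof (fejer_kernel_far N d (t - s) d_range (conj Hfar1 Hfar2)).
      apply (Rmult_le_reg_r c); [exact Hc |].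
      unfold Rdiv. rewrite Rmult_assoc, Rinv_l, Rmult_1_r by lra. assumption. }
    assert (Hdiff : Rabs (phi s - phi t) <= 2 * M).
    { unfold Rminus. eapply Rle_trans; [apply Rabs_triang |]. rewrite Rabs_Ropp.
      pose proof (phi_bound s Hs). pose proof (phi_bound t Ht). lra. }
    replace (4 * M / c) with (2 * M * (2 / c)) by (field; lra).
    pose proof (Rabs_pos (phi s - phi t)). pose proof eta_pos. nra.
Qed.

Lemma fejer_mean_error_le (N : nat) (t : R) : (1 <= N)%nat -> I01 t ->
  Rabs (phi t - fejer_mean phi N t) <= 2 * eta + 4 * M / (c * INR N).
Proof.
  intros HN Ht. assert (HN0 : 0 < INR N) by (apply lt_0_INR; lia).
  pose proof (versin_2PI_pos d d_range) as Hc. fold c in Hc.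
  assert (Hint : is_RInt (fun s => (phi s - phi t) * fejer_kernel N (2 * PI * (t - s))) 0 1
                         (INR N * fejer_mean phi N t - phi t * INR N)).
  { eapply is_RInt_congr.
    - exact (is_RInt_Rminus _ _ _ _ _ _ (is_RInt_fejer_convolution phi phi_cont N t HN)
               (is_RInt_Rscal _ _ _ (phi t) _ (is_RInt_fejer_kernel N t HN))).
    - intros s _. cbv beta. ring.
    - reflexivity. }
  assert (Hbound : is_RInt (fun s => 2 * eta * fejer_kernel N (2 * PI * (t - s)) + 4 * M / c) 0 1
                           (2 * eta * INR N + 4 * M / c)).
  { eapply is_RInt_congr.
    - exact (is_RInt_Rplus _ _ _ _ _ _ (is_RInt_Rscal _ _ _ (2 * eta) _ (is_RInt_fejer_kernel N t HN))
               (is_RInt_Rconst (4 * M / c) 0 1)).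
    - intros s _. reflexivity.
    - ring. }
  pose proof (norm_RInt_le _ _ 0 1 _ _ Rle_0_1 (fun s Hs => fejer_integrand_bound N s t Hs Ht) Hint Hbound)
    as Hle.
  change norm with Rabs in Hle.
  replace (INR N * fejer_mean phi N t - phi t * INR N) with (- (INR N * (phi t - fejer_mean phi N t)))
    in Hle by ring.
  rewrite Rabs_Ropp, Rabs_mult, (Rabs_pos_eq (INR N)) in Hle by lra.
  apply (Rmult_le_reg_l (INR N) _ _ HN0). eapply Rle_trans; [exact Hle |].
  right. field. lra.
Qed.

End FejerError.

Theorem fejer_mean_uniform (phi : R -> R) : (forall x, continuous phi x) -> phi 0 = phi 1 ->
  forall eps, 0 < eps -> exists N0 : nat, forall N, (N0 <= N)%nat -> forall t, I01 t ->
    Rabs (phi t - fejer_mean phi N t) < eps.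
Proof.
  intros Hcont H01 eps Heps.
  assert (Hpt : forall x, continuity_pt phi x) by (intros x; apply continuity_pt_filterlim, Hcont).
  assert (Heps4 : 0 < eps / 4) by lra.
  destruct (Heine_cor2 (f := phi) (a := 0) (b := 1) (fun x _ => Hpt x) (mkposreal _ Heps4)) as [delta Hdelta].
  destruct (continuity_ab_maj (fun x => Rabs (phi x)) 0 1 Rle_0_1) as [xM [HxM _]].
  { intros x _. apply (continuity_pt_comp phi Rabs); [apply Hpt | apply Rcontinuity_abs]. }
  set (d := Rmin delta (1 / 2)). set (M := Rabs (phi xM)).
  assert (Hd : 0 < d <= 1 / 2) by (pose proof (cond_pos delta); unfold d; split; [apply Rmin_glb_lt | apply Rmin_r]; lra).
  pose proof (versin_2PI_pos d Hd) as Hc. set (c := 1 - cos (2 * PI * d)) in Hc.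
  assert (HM : 0 <= M) by apply Rabs_pos.
  destruct (INR_unbounded (8 * M / (c * eps))) as [N1 HN1].
  exists (S N1). intros N HN t Ht.
  assert (HN1N : INR N1 < INR N) by (apply lt_INR; lia).
  assert (HcN : 0 < c * INR N) by (apply Rmult_lt_0_compat; [exact Hc | apply lt_0_INR; lia]).
  assert (H8M : 8 * M < eps * (c * INR N)).
  { assert (H8 : 8 * M / (c * eps) * (c * eps) < INR N * (c * eps)) by (apply Rmult_lt_compat_r; nra).
    replace (8 * M / (c * eps) * (c * eps)) with (8 * M) in H8 by (field; lra). lra. }
  assert (H4M : 4 * M / (c * INR N) < eps / 2).
  { unfold Rdiv. apply (Rmult_lt_reg_r (c * INR N)); [exact HcN |].
    rewrite Rmult_assoc, Rinv_l by lra. lra. }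
  apply Rle_lt_trans with (2 * (eps / 4) + 4 * M / (c * INR N)); [| lra].
  apply (fejer_mean_error_le phi Hcont H01 (eps / 4) d M Hd); [| | lia | exact Ht].
  - intros x y Hx Hy Hxy. apply Hdelta; [exact Hx | exact Hy |].
    apply Rlt_le_trans with d; [exact Hxy | apply Rmin_l].
  - intros x Hx. apply HxM, Hx.
Qed.

(** * The sums of the expansion *)

Lemma C_eq_of_Re_Im (a b : C) : Re a = Re b -> Im a = Im b -> a = b.
Proof. destruct a, b. unfold Re, Im. cbn. intros -> ->. reflexivity. Qed.

Lemma eq_0_of_Cmod_small (z : C) : (forall eps, 0 < eps -> Cmod z < eps) -> z = 0%C.
Proof.
  intros Hz. apply Cmod_eq_0. destruct (Req_dec (Cmod z) 0) as [E | E]; [exact E |].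
  pose proof (Cmod_ge_0 z). specialize (Hz (Cmod z) ltac:(lra)). lra.
Qed.

Lemma im_le_Cmod (z : C) : Rabs (Im z) <= Cmod z.
Proof. eapply Rle_trans; [apply Rmax_r | apply Rmax_Cmod]. Qed.

Lemma Cmod_le_Re_Im (z : C) : Cmod z <= Rabs (Re z) + Rabs (Im z).
Proof.
  replace z with (RtoC (Re z) + Ci * RtoC (Im z))%C at 1
    by (apply C_eq_of_Re_Im; unfold Re, Im, Ci, RtoC, Cplus, Cmult; cbn; ring).
  eapply Rle_trans; [apply Cmod_triangle |]. rewrite Cmod_mult, Cmod_Ci, !Cmod_R. lra.
Qed.

Lemma continuous_Re_comp (f : R -> C) (x : R) : continuous f x -> continuous (fun t => Re (f t)) x.
Proof. intros Hf. apply (continuous_comp f Re); [exact Hf |]. destruct (f x). apply continuous_fst. Qed.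

Lemma continuous_Im_comp (f : R -> C) (x : R) : continuous f x -> continuous (fun t => Im (f t)) x.
Proof. intros Hf. apply (continuous_comp f Im); [exact Hf |]. destruct (f x). apply continuous_snd. Qed.

Lemma Re_2iPIh_mul (h : Z) (z : C) :
  Re (RtoC 2 * Ci * RtoC PI * RtoC (IZR h) * z)%C = - (2 * PI * IZR h) * Im z.
Proof. unfold Re, Im, Cmult, Ci, RtoC. cbn [fst snd]. ring. Qed.

Lemma Im_2iPIh_mul (h : Z) (z : C) :
  Im (RtoC 2 * Ci * RtoC PI * RtoC (IZR h) * z)%C = 2 * PI * IZR h * Re z.
Proof. unfold Re, Im, Cmult, Ci, RtoC. cbn [fst snd]. ring. Qed.

Lemma cos_2PI_INR_reflect (m : nat) (t : R) : cos (2 * PI * INR m * (1 - t)) = cos (2 * PI * INR m * t).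
Proof.
  rewrite <- (cos_2PI_IZR_sub (Z.of_nat m) (2 * PI * INR m * t)), <- INR_IZR_INZ. f_equal. ring.
Qed.

Lemma sin_2PI_INR_reflect (m : nat) (t : R) : sin (2 * PI * INR m * (1 - t)) = - sin (2 * PI * INR m * t).
Proof.
  rewrite <- (sin_2PI_IZR_sub (Z.of_nat m) (2 * PI * INR m * t)), <- INR_IZR_INZ. f_equal. ring.
Qed.

(* The [h = m] and [h = -m] terms of the expansion combine into [sin_amplitude alpha m * sin (2 pi m t)]
   (real part) and [versin_amplitude alpha m * (1 - cos (2 pi m t))] (imaginary part). *)
Definition sin_amplitude (alpha : Z -> R) (m : nat) : R :=
  (alpha (Z.of_nat m) + alpha (- Z.of_nat m)%Z) / (2 * PI * INR m).

Definition versin_amplitude (alpha : Z -> R) (m : nat) : R :=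
  (alpha (Z.of_nat m) - alpha (- Z.of_nat m)%Z) / (2 * PI * INR m).

Lemma kterm_parts (alpha : Z -> R) (h : Z) (t : R) : h <> 0%Z ->
  kterm alpha h t = (alpha h * sin (2 * PI * IZR h * t) / (2 * PI * IZR h),
                     alpha h * (1 - cos (2 * PI * IZR h * t)) / (2 * PI * IZR h)).
Proof.
  intros Hh. pose proof PI_RGT_0. pose proof (eq_IZR_contrapositive _ _ Hh).
  unfold kterm, e. replace (2 * PI * (IZR h * t)) with (2 * PI * IZR h * t) by ring.
  unfold Cdiv, Cinv, Cmult, Cminus, Cplus, Copp, RtoC, Ci. simpl.
  f_equal; field; split; lra.
Qed.

Lemma fejer_sum_Re_Im (alpha : Z -> R) (N M : nat) (t : R) :
  Re (fejer_sum alpha N M t) =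
    sum_n_m (fun m => fejer_weight N m * (sin_amplitude alpha m * sin (2 * PI * INR m * t))) 1 M /\
  Im (fejer_sum alpha N M t) =
    sum_n_m (fun m => fejer_weight N m * (versin_amplitude alpha m * (1 - cos (2 * PI * INR m * t)))) 1 M.
Proof.
  induction M as [| M [IHre IHim]].
  - rewrite !sum_n_m_Rempty by lia. split; reflexivity.
  - cbn [fejer_sum]. change (1 - INR (S M) / INR N) with (fejer_weight N (S M)).
    rewrite !sum_n_m_Rsucc, <- IHre, <- IHim by lia.
    rewrite !kterm_parts by lia. rewrite opp_IZR, <- INR_IZR_INZ.
    replace (2 * PI * - INR (S M) * t) with (- (2 * PI * INR (S M) * t)) by ring.
    rewrite sin_neg, cos_neg.
    pose proof PI_RGT_0. assert (INR (S M) <> 0) by (apply not_0_INR; lia).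
    unfold sin_amplitude, versin_amplitude, Cplus, Cmult, RtoC, Re, Im. cbn [fst snd].
    split; field; split; lra.
Qed.

Lemma fejer_Re (alpha : Z -> R) (N : nat) (t : R) :
  Re (fejer alpha N t) =
    alpha 0%Z * t + sum_n_m (fun m => fejer_weight N m * (sin_amplitude alpha m * sin (2 * PI * INR m * t))) 1 N.
Proof. unfold fejer. rewrite re_plus, re_RtoC, (proj1 (fejer_sum_Re_Im alpha N N t)). reflexivity. Qed.

Lemma fejer_Im (alpha : Z -> R) (N : nat) (t : R) :
  Im (fejer alpha N t) =
    sum_n_m (fun m => fejer_weight N m * (versin_amplitude alpha m * (1 - cos (2 * PI * INR m * t)))) 1 N.
Proof. unfold fejer. rewrite im_plus, im_RtoC, (proj2 (fejer_sum_Re_Im alpha N N t)). ring. Qed.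

Lemma fejer_reflect (alpha : Z -> R) (N : nat) (t : R) :
  (fejer alpha N t + Cconj (fejer alpha N (1 - t)))%C = RtoC (alpha 0%Z).
Proof.
  apply C_eq_of_Re_Im.
  - rewrite re_plus, re_conj, re_RtoC, !fejer_Re.
    rewrite (sum_n_m_Rext (fun m => fejer_weight N m * (sin_amplitude alpha m * sin (2 * PI * INR m * (1 - t))))
               (fun m => -1 * (fejer_weight N m * (sin_amplitude alpha m * sin (2 * PI * INR m * t)))))
      by (intros m _; rewrite sin_2PI_INR_reflect; ring).
    rewrite sum_n_m_Rmult_l. ring.
  - rewrite im_plus, im_conj, im_RtoC, !fejer_Im.
    rewrite (sum_n_m_Rext (fun m => fejer_weight N m * (versin_amplitude alpha m * (1 - cos (2 * PI * INR m * (1 - t)))))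
               (fun m => fejer_weight N m * (versin_amplitude alpha m * (1 - cos (2 * PI * INR m * t)))))
      by (intros m _; rewrite cos_2PI_INR_reflect; reflexivity).
    ring.
Qed.

Lemma fejer_at_1 (alpha : Z -> R) (N : nat) : fejer alpha N 1 = RtoC (alpha 0%Z).
Proof.
  apply C_eq_of_Re_Im; rewrite ?fejer_Re, ?fejer_Im, ?re_RtoC, ?im_RtoC;
    rewrite (sum_n_m_Rext _ (fun _ => 0)), sum_n_m_const; try ring;
    intros m _; rewrite Rmult_1_r.
  - rewrite (proj2 (cos_sin_2PI_INR m)). ring.
  - rewrite (proj1 (cos_sin_2PI_INR m)). ring.
Qed.

Theorem expansion_F0 (f : R -> C) (alpha : Z -> R) : expansion f alpha -> inF0 f.
Proof.
  intros Hexp t Ht.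
  assert (Ht' : I01 (1 - t)) by (unfold I01 in *; lra). assert (H1 : I01 1) by (unfold I01; lra).
  assert (Hz : (f t + Cconj (f (1 - t)%R) - f 1)%C = 0%C).
  { apply eq_0_of_Cmod_small. intros eps Heps.
    destruct (Hexp (eps / 3) ltac:(lra)) as [N HN].
    specialize (HN N (le_n N)).
    replace (f t + Cconj (f (1 - t)%R) - f 1)%C
      with ((f t - fejer alpha N t) + Cconj (f (1 - t)%R - fejer alpha N (1 - t)%R)
            - (f 1 - fejer alpha N 1))%C
      by (rewrite Cminus_conj, fejer_at_1, <- (fejer_reflect alpha N t); ring).
    eapply Rle_lt_trans; [apply Cmod_triangle |]. rewrite Cmod_opp.
    eapply Rle_lt_trans; [apply Rplus_le_compat_r, Cmod_triangle |]. rewrite Cmod_conj.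
    pose proof (HN t Ht). pose proof (HN (1 - t) Ht'). pose proof (HN 1 H1). lra. }
  rewrite <- (Cplus_0_r (f 1)), <- Hz. ring.
Qed.

(** * Uniqueness of the coefficients *)

Lemma kterm_sub (alpha beta : Z -> R) (h : Z) (t : R) :
  kterm (fun k => alpha k - beta k) h t = (kterm alpha h t - kterm beta h t)%C.
Proof. unfold kterm. rewrite RtoC_minus. ring. Qed.

Lemma fejer_sub (alpha beta : Z -> R) (N : nat) (t : R) :
  fejer (fun h => alpha h - beta h) N t = (fejer alpha N t - fejer beta N t)%C.
Proof.
  assert (Hsum : forall M, fejer_sum (fun h => alpha h - beta h) N M t
                           = (fejer_sum alpha N M t - fejer_sum beta N M t)%C).
  { induction M as [| M IH]; cbn [fejer_sum]; [ring |]. rewrite IH, !kterm_sub. ring. }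
  unfold fejer. rewrite Hsum, !RtoC_mult, RtoC_minus. ring.
Qed.

Lemma fejer_ext (alpha beta : Z -> R) (N : nat) (t : R) :
  (forall h, alpha h = beta h) -> fejer alpha N t = fejer beta N t.
Proof.
  intros Hab. unfold fejer. rewrite Hab. f_equal.
  generalize N at 2 4. intros M.
  induction M as [| M IH]; cbn [fejer_sum]; [reflexivity |].
  rewrite IH. unfold kterm. rewrite !Hab. reflexivity.
Qed.

Lemma sum_n_m_kronecker (c : nat -> R) (m n : nat) : (1 <= m)%nat ->
  sum_n_m (fun j => if Nat.eqb j m then c j else 0) 1 n = (if Nat.leb m n then c m else 0) :> R.
Proof.
  intros Hm. induction n as [| n IH].
  - rewrite sum_n_m_Rempty by lia. destruct m; [lia | reflexivity].
  - rewrite sum_n_m_Rsucc, IH by lia.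
    destruct (Nat.eqb_spec (S n) m) as [<- | Hne].
    + rewrite Nat.leb_refl. destruct (Nat.leb_spec (S n) n); [lia | ring].
    + destruct (Nat.leb_spec m n); destruct (Nat.leb_spec m (S n)); try lia; ring.
Qed.

Lemma is_RInt_sum_orthogonal (a : nat -> R) (b : nat -> R -> R) (psi : R -> R) (c : R) (m n : nat) :
  (1 <= m <= n)%nat ->
  (forall j, (1 <= j <= n)%nat -> is_RInt (fun t => b j t * psi t) 0 1 (if Nat.eqb j m then c else 0)) ->
  is_RInt (fun t => sum_n_m (fun j => a j * b j t) 1 n * psi t) 0 1 (a m * c).
Proof.
  intros Hm Horth. eapply is_RInt_congr.
  - apply (is_RInt_sum_n_m (fun j t => a j * (b j t * psi t))
                           (fun j => a j * (if Nat.eqb j m then c else 0)) 0 1 1 n).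
    intros j Hj. apply is_RInt_Rscal, Horth, Hj.
  - intros t _. rewrite (Rmult_comm (sum_n_m _ 1 n)), <- sum_n_m_Rmult_l.
    apply sum_n_m_Rext. intros j _. ring.
  - rewrite (sum_n_m_Rext _ (fun j => if Nat.eqb j m then a j * c else 0))
      by (intros j _; destruct (Nat.eqb j m); ring).
    rewrite sum_n_m_kronecker by lia. destruct (Nat.leb_spec m n); [reflexivity | lia].
Qed.

Lemma is_RInt_fejer_Re_sin (alpha : Z -> R) (N m : nat) : (1 <= m <= N)%nat ->
  is_RInt (fun t => Re (fejer alpha N t) * sin (2 * PI * INR m * t)) 0 1
    (- alpha 0%Z / (2 * PI * INR m) + fejer_weight N m * (sin_amplitude alpha m / 2)).
Proof.
  intros Hm. pose proof (is_RInt_id_sin_2PI (Z.of_nat m) ltac:(lia)) as Hid.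
  rewrite <- INR_IZR_INZ in Hid. eapply is_RInt_congr.
  - eapply is_RInt_Rplus; [exact (is_RInt_Rscal _ _ _ (alpha 0%Z) _ Hid) |].
    eapply (is_RInt_sum_orthogonal (fun j => fejer_weight N j * sin_amplitude alpha j)
              (fun j t => sin (2 * PI * INR j * t))); [exact Hm |].
    intros j Hj. apply is_RInt_sin_sin_2PI; lia.
  - intros t _. rewrite fejer_Re, Rmult_plus_distr_r. f_equal; [ring |]. f_equal.
    apply sum_n_m_Rext. intros j _. ring.
  - unfold Rdiv. ring.
Qed.

Lemma is_RInt_fejer_Im_cos (alpha : Z -> R) (N m : nat) : (1 <= m <= N)%nat ->
  is_RInt (fun t => Im (fejer alpha N t) * cos (2 * PI * INR m * t)) 0 1
    (0 + fejer_weight N m * (- versin_amplitude alpha m / 2)).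
Proof.
  intros Hm. eapply is_RInt_congr.
  - eapply (is_RInt_sum_orthogonal (fun j => fejer_weight N j * versin_amplitude alpha j)
              (fun j t => 1 - cos (2 * PI * INR j * t))); [exact Hm |].
    intros j Hj. apply is_RInt_versin_cos_2PI; lia.
  - intros t _. rewrite fejer_Im. f_equal. apply sum_n_m_Rext. intros j _. ring.
  - unfold Rdiv. ring.
Qed.

Lemma is_lim_seq_fejer_weight (m : nat) : is_lim_seq (fun N => fejer_weight N m) 1.
Proof.
  replace 1 with (1 - INR m * 0) by ring.
  apply is_lim_seq_minus'; [apply is_lim_seq_const |].
  apply (is_lim_seq_scal_l (fun N => / INR N) (INR m) 0).
  replace (Finite 0) with (Rbar_inv p_infty) by reflexivity.
  apply is_lim_seq_inv; [apply is_lim_seq_INR | discriminate].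
Qed.

(* The tested integrals tend both to [0] and, since the weight tends to [1], to [c + a]. *)
Lemma weighted_limit_zero (g : nat -> R -> R) (psi : R -> R) (c a : R) (m : nat) :
  (forall t, Rabs (psi t) <= 1) ->
  (forall eps, 0 < eps -> exists N0, forall N, (N0 <= N)%nat -> forall t, I01 t -> Rabs (g N t) < eps) ->
  (forall N, (m <= N)%nat -> is_RInt (fun t => g N t * psi t) 0 1 (c + fejer_weight N m * a)) ->
  c + a = 0.
Proof.
  intros Hpsi Hg Hint.
  assert (Hlim : is_lim_seq (fun N => c + fejer_weight N m * a) (c + 1 * a)).
  { apply is_lim_seq_plus'; [apply is_lim_seq_const |].
    apply is_lim_seq_mult'; [apply is_lim_seq_fejer_weight | apply is_lim_seq_const]. }
  assert (Hzero : is_lim_seq (fun N => c + fejer_weight N m * a) 0).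
  { apply is_lim_seq_spec. intros eps.
    destruct (Hg (eps / 2) ltac:(pose proof (cond_pos eps); lra)) as [N0 HN0].
    exists (Nat.max N0 m). intros N HN. rewrite Rminus_0_r.
    apply Rle_lt_trans with (eps / 2); [| pose proof (cond_pos eps); lra].
    assert (Hb : norm (c + fejer_weight N m * a) <= Rabs (1 - 0) * (eps / 2)).
    { apply (norm_RInt_le_const_abs (fun t => g N t * psi t) 0 1); [| apply Hint; lia].
      intros t Ht. rewrite Rmin_left, Rmax_right in Ht by lra. change norm with Rabs.
      rewrite Rabs_mult. pose proof (HN0 N ltac:(lia) t Ht). pose proof (Hpsi t).
      pose proof (Rabs_pos (g N t)). pose proof (Rabs_pos (psi t)). nra. }
    change norm with Rabs in Hb. rewrite Rminus_0_r, Rabs_R1, Rmult_1_l in Hb. exact Hb. }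
  apply is_lim_seq_unique in Hlim. apply is_lim_seq_unique in Hzero.
  rewrite Hlim, Rmult_1_l in Hzero. injection Hzero. auto.
Qed.

Lemma amplitudes_eq_0 (beta : Z -> R) (m : nat) : (1 <= m)%nat ->
  sin_amplitude beta m = 0 -> versin_amplitude beta m = 0 ->
  beta (Z.of_nat m) = 0 /\ beta (- Z.of_nat m)%Z = 0.
Proof.
  intros Hm Hs Hv. pose proof PI_RGT_0. assert (INR m <> 0) by (apply not_0_INR; lia).
  assert (Hp : beta (Z.of_nat m) + beta (- Z.of_nat m)%Z = sin_amplitude beta m * (2 * PI * INR m))
    by (unfold sin_amplitude; field; lra).
  assert (Hd : beta (Z.of_nat m) - beta (- Z.of_nat m)%Z = versin_amplitude beta m * (2 * PI * INR m))
    by (unfold versin_amplitude; field; lra).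
  rewrite Hs in Hp. rewrite Hv in Hd. lra.
Qed.

Section VanishingFejerSums.

Variable beta : Z -> R.
Hypothesis fejer_vanish : forall eps, 0 < eps ->
  exists N0, forall N, (N0 <= N)%nat -> forall t, I01 t -> Cmod (fejer beta N t) < eps.

Lemma vanishing_coef_0 : beta 0%Z = 0.
Proof.
  assert (Hz : RtoC (beta 0%Z) = 0%C).
  { apply eq_0_of_Cmod_small. intros eps Heps. destruct (fejer_vanish eps Heps) as [N0 HN0].
    rewrite <- (fejer_at_1 beta N0). apply HN0; [lia | unfold I01; lra]. }
  rewrite <- (re_RtoC (beta 0%Z)), Hz. reflexivity.
Qed.

Lemma vanishing_sin_amplitude (m : nat) : (1 <= m)%nat -> sin_amplitude beta m = 0.
Proof.
  intros Hm.
  assert (H : - beta 0%Z / (2 * PI * INR m) + sin_amplitude beta m / 2 = 0).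
  { apply (weighted_limit_zero (fun N t => Re (fejer beta N t)) (fun t => sin (2 * PI * INR m * t)) _ _ m).
    - intros t. apply Rabs_le, SIN_bound.
    - intros eps Heps. destruct (fejer_vanish eps Heps) as [N0 HN0]. exists N0. intros N HN t Ht.
      eapply Rle_lt_trans; [apply re_le_Cmod | apply HN0; assumption].
    - intros N HN. apply is_RInt_fejer_Re_sin. lia. }
  rewrite vanishing_coef_0 in H. unfold Rdiv in H. lra.
Qed.

Lemma vanishing_versin_amplitude (m : nat) : (1 <= m)%nat -> versin_amplitude beta m = 0.
Proof.
  intros Hm.
  assert (H : 0 + - versin_amplitude beta m / 2 = 0).
  { apply (weighted_limit_zero (fun N t => Im (fejer beta N t)) (fun t => cos (2 * PI * INR m * t)) _ _ m).
    - intros t. apply Rabs_le, COS_bound.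
    - intros eps Heps. destruct (fejer_vanish eps Heps) as [N0 HN0]. exists N0. intros N HN t Ht.
      eapply Rle_lt_trans; [apply im_le_Cmod | apply HN0; assumption].
    - intros N HN. apply is_RInt_fejer_Im_cos. lia. }
  lra.
Qed.

Lemma vanishing_coef (h : Z) : beta h = 0.
Proof.
  assert (Hm : forall m, (1 <= m)%nat -> beta (Z.of_nat m) = 0 /\ beta (- Z.of_nat m)%Z = 0)
    by (intros m Hm; apply amplitudes_eq_0; [| apply vanishing_sin_amplitude | apply vanishing_versin_amplitude];
        exact Hm).
  destruct h as [| p | p].
  - exact vanishing_coef_0.
  - rewrite <- positive_nat_Z. apply Hm. lia.
  - rewrite <- Pos2Z.opp_pos, <- positive_nat_Z. apply Hm. lia.
Qed.

End VanishingFejerSums.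

Theorem expansion_unique (f : R -> C) (alpha beta : Z -> R) :
  expansion f alpha -> expansion f beta -> forall h, alpha h = beta h.
Proof.
  intros Ha Hb h. apply Rminus_diag_uniq. revert h.
  apply vanishing_coef. intros eps Heps.
  destruct (Ha (eps / 2) ltac:(lra)) as [Na HNa]. destruct (Hb (eps / 2) ltac:(lra)) as [Nb HNb].
  exists (Nat.max Na Nb). intros N HN t Ht. rewrite fejer_sub.
  replace (fejer alpha N t - fejer beta N t)%C with ((f t - fejer beta N t) - (f t - fejer alpha N t))%C by ring.
  eapply Rle_lt_trans; [apply Cmod_triangle |]. rewrite Cmod_opp.
  pose proof (HNa N ltac:(lia) t Ht). pose proof (HNb N ltac:(lia) t Ht). lra.
Qed.

(** * Coefficients of the functions of F_0 *)

Lemma fhat_parts (G : R -> C) (h : Z) :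
  (forall x, continuous (fun t => Re (G t)) x) -> (forall x, continuous (fun t => Im (G t)) x) ->
  fhat G h = (cos_coef (fun t => Re (G t)) (IZR h) + sin_coef (fun t => Im (G t)) (IZR h),
              cos_coef (fun t => Im (G t)) (IZR h) - sin_coef (fun t => Re (G t)) (IZR h)).
Proof.
  intros HRe HIm. unfold fhat. apply (is_RInt_unique (V := C_R_CompleteNormedModule)).
  assert (He : forall t, e (- IZR h * t) = (cos (2 * PI * IZR h * t), - sin (2 * PI * IZR h * t))).
  { intros t. unfold e. rewrite <- cos_neg, <- sin_neg. do 3 f_equal; ring. }
  apply (is_RInt_fct_extend_pair (U := R_NormedModule) (V := R_NormedModule)).
  - apply (is_RInt_congr _ _ _ _ _ _
      (is_RInt_Rplus _ _ _ _ _ _ (is_RInt_cos_coef _ HRe (IZR h)) (is_RInt_sin_coef _ HIm (IZR h))));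
      [| reflexivity].
    intros t _. rewrite He. unfold Cmult, Re, Im. cbn [fst snd]. ring.
  - apply (is_RInt_congr _ _ _ _ _ _
      (is_RInt_Rminus _ _ _ _ _ _ (is_RInt_cos_coef _ HIm (IZR h)) (is_RInt_sin_coef _ HRe (IZR h))));
      [| reflexivity].
    intros t _. rewrite He. unfold Cmult, Re, Im. cbn [fst snd]. ring.
Qed.

Definition detrend (f : R -> C) (t : R) : C := (f t - RtoC t * f 1)%C.

Lemma Re_detrend (f : R -> C) (t : R) : Re (detrend f t) = Re (f t) - t * Re (f 1).
Proof. unfold detrend, Cminus, Cplus, Copp, Cmult, RtoC, Re, Im. cbn [fst snd]. ring. Qed.

Lemma Im_detrend (f : R -> C) (t : R) : Im (detrend f t) = Im (f t) - t * Im (f 1).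
Proof. unfold detrend, Cminus, Cplus, Copp, Cmult, RtoC, Re, Im. cbn [fst snd]. ring. Qed.

Lemma F0_Re_Im (f : R -> C) (t : R) : inF0 f -> I01 t ->
  Re (f t) + Re (f (1 - t)) = Re (f 1) /\ Im (f t) - Im (f (1 - t)) = Im (f 1).
Proof.
  intros HF Ht. rewrite <- (HF t Ht), re_plus, im_plus, re_conj, im_conj. split; ring.
Qed.

Lemma F0_endpoints (f : R -> C) : inF0 f -> f 0 = 0%C /\ Im (f 1) = 0.
Proof.
  intros HF.
  destruct (F0_Re_Im f 0 HF ltac:(unfold I01; lra)) as [Re0 Im0].
  destruct (F0_Re_Im f 1 HF ltac:(unfold I01; lra)) as [Re1 Im1].
  rewrite Rminus_0_r in Re0, Im0. rewrite Rminus_eq_0 in Re1, Im1.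
  split; [apply C_eq_of_Re_Im; rewrite ?re_RtoC, ?im_RtoC |]; lra.
Qed.

Lemma F0_detrend_reflect (f : R -> C) (t : R) : inF0 f -> I01 t ->
  Re (detrend f (1 - t)) = - Re (detrend f t) /\ Im (detrend f (1 - t)) = Im (detrend f t).
Proof.
  intros HF Ht. destruct (F0_Re_Im f t HF Ht) as [HRe HIm]. destruct (F0_endpoints f HF) as [_ HIm1].
  rewrite !Re_detrend, !Im_detrend. split; [lra |]. rewrite HIm1 in *. lra.
Qed.

Definition expansion_coef (f : R -> C) (h : Z) : R :=
  Re (f 1 + RtoC 2 * Ci * RtoC PI * RtoC (IZR h) * fhat f h)%C.

Definition coef_relations (f : R -> C) (alpha : Z -> R) : Prop :=
  forall h : Z, RtoC (alpha h) = (f 1 + RtoC 2 * Ci * RtoC PI * RtoC (IZR h) * fhat f h)%C.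

Lemma coef_relations_iff (f : R -> C) (alpha : Z -> R) :
  coef_relations f alpha <->
  RtoC (alpha 0%Z) = f 1 /\
  (forall h : Z, h <> 0%Z -> RtoC (alpha h) = (f 1 + RtoC 2 * Ci * RtoC PI * RtoC (IZR h) * fhat f h)%C).
Proof.
  split.
  - intros Hrel. split; [| intros h _; apply Hrel]. rewrite Hrel. ring.
  - intros [H0 Hh] h. destruct (Z.eq_dec h 0) as [-> | Hne]; [rewrite H0; ring | apply Hh, Hne].
Qed.

Lemma coef_relations_eq (f : R -> C) (alpha : Z -> R) :
  coef_relations f alpha -> forall h, alpha h = expansion_coef f h.
Proof. intros Hrel h. unfold expansion_coef. rewrite <- Hrel. apply re_RtoC. Qed.

Lemma Rabs_sub_le (a b : R) : Rabs (a - b) <= Rabs a + Rabs b.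
Proof. unfold Rminus. rewrite <- (Rabs_Ropp b). apply Rabs_triang. Qed.

Lemma Cmod_pair_0_l (y : R) : Cmod (0, y) = Rabs y.
Proof. unfold Cmod. cbn [fst snd]. rewrite <- sqrt_Rsqr_abs. f_equal. unfold Rsqr. ring. Qed.

Lemma Rabs_div_2PI_le_iff (a x : R) : x <> 0 ->
  (Rabs (- a / (2 * PI * x)) <= 1 / (PI * Rabs x) <-> Rabs a <= 2).
Proof.
  intros Hx. pose proof PI_RGT_0. pose proof (Rabs_pos_lt x Hx).
  assert (E : Rabs (- a / (2 * PI * x)) = Rabs a / 2 * (1 / (PI * Rabs x))).
  { unfold Rdiv. rewrite Rabs_mult, Rabs_Ropp, Rabs_inv, !Rabs_mult, (Rabs_pos_eq 2), (Rabs_pos_eq PI) by lra.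
    field. lra. }
  assert (Hq : 0 < 1 / (PI * Rabs x)) by (apply Rdiv_lt_0_compat; nra).
  rewrite E. split; intros Hb.
  - assert (Rabs a / 2 <= 1) by (apply (Rmult_le_reg_r (1 / (PI * Rabs x))); lra). lra.
  - rewrite <- (Rmult_1_l (1 / (PI * Rabs x))) at 2. apply Rmult_le_compat_r; lra.
Qed.

Section ContinuousCoefficients.

Variable f : R -> C.
Hypothesis f_cont : forall x, continuous f x.
Let u (t : R) : R := Re (detrend f t).
Let v (t : R) : R := Im (detrend f t).

Lemma detrend_Re_cont (x : R) : continuous u x.
Proof.
  apply (continuous_ext (fun t => Re (f t) - t * Re (f 1))); [intros t; symmetry; apply Re_detrend |].
  apply (continuous_minus (V := R_NormedModule)); [apply continuous_Re_comp, f_cont |].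
  apply (continuous_mult (K := R_AbsRing)); [apply continuous_id | apply continuous_const].
Qed.

Lemma detrend_Im_cont (x : R) : continuous v x.
Proof.
  apply (continuous_ext (fun t => Im (f t) - t * Im (f 1))); [intros t; symmetry; apply Im_detrend |].
  apply (continuous_minus (V := R_NormedModule)); [apply continuous_Im_comp, f_cont |].
  apply (continuous_mult (K := R_AbsRing)); [apply continuous_id | apply continuous_const].
Qed.

(* [ghat h = fhat h - f(1) * int_0^1 t e(-h t) dt], and the last integral is [i / (2 pi h)]. *)
Lemma fhat_detrend (h : Z) : h <> 0%Z ->
  (f 1 + RtoC 2 * Ci * RtoC PI * RtoC (IZR h) * fhat f h)%C
  = (RtoC 2 * Ci * RtoC PI * RtoC (IZR h) * fhat (detrend f) h)%C.
Proof.
  intros Hh.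
  rewrite (fhat_parts f), (fhat_parts (detrend f)) by
    (intros x; solve [apply detrend_Re_cont | apply detrend_Im_cont
                     | apply continuous_Re_comp, f_cont | apply continuous_Im_comp, f_cont]).
  fold u v.
  rewrite (cos_coef_sub_line (fun t => Re (f t)) (fun x => continuous_Re_comp f x (f_cont x)) u (Re (f 1)) h Hh),
          (sin_coef_sub_line (fun t => Re (f t)) (fun x => continuous_Re_comp f x (f_cont x)) u (Re (f 1)) h Hh),
          (cos_coef_sub_line (fun t => Im (f t)) (fun x => continuous_Im_comp f x (f_cont x)) v (Im (f 1)) h Hh),
          (sin_coef_sub_line (fun t => Im (f t)) (fun x => continuous_Im_comp f x (f_cont x)) v (Im (f 1)) h Hh)
    by (intros t; unfold u, v; rewrite ?Re_detrend, ?Im_detrend; ring).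
  destruct (f 1) as [a b]. unfold Re, Im, Cplus, Cmult, Ci, RtoC. cbn [fst snd].
  f_equal; field; (split; [now apply eq_IZR_contrapositive | apply PI_neq0]).
Qed.

Lemma fhat_detrend_parts (h : Z) :
  fhat (detrend f) h = (cos_coef u (IZR h) + sin_coef v (IZR h), cos_coef v (IZR h) - sin_coef u (IZR h)).
Proof. apply fhat_parts; [apply detrend_Re_cont | apply detrend_Im_cont]. Qed.

Lemma expansion_coef_0 : expansion_coef f 0 = Re (f 1).
Proof. unfold expansion_coef. f_equal. ring. Qed.

Lemma expansion_coef_detrend (h : Z) : h <> 0%Z ->
  expansion_coef f h = - (2 * PI * IZR h) * (cos_coef v (IZR h) - sin_coef u (IZR h)).
Proof.
  intros Hh. unfold expansion_coef. rewrite fhat_detrend, Re_2iPIh_mul, fhat_detrend_parts by exact Hh.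
  reflexivity.
Qed.

Lemma sin_amplitude_expansion_coef (m : nat) : (1 <= m)%nat ->
  sin_amplitude (expansion_coef f) m = 2 * sin_coef u (INR m).
Proof.
  intros Hm. pose proof PI_RGT_0. assert (INR m <> 0) by (apply not_0_INR; lia).
  unfold sin_amplitude. rewrite !expansion_coef_detrend by lia.
  rewrite opp_IZR, <- INR_IZR_INZ, cos_coef_opp, sin_coef_opp by apply detrend_Re_cont.
  field. lra.
Qed.

Lemma versin_amplitude_expansion_coef (m : nat) : (1 <= m)%nat ->
  versin_amplitude (expansion_coef f) m = - 2 * cos_coef v (INR m).
Proof.
  intros Hm. pose proof PI_RGT_0. assert (INR m <> 0) by (apply not_0_INR; lia).
  unfold versin_amplitude. rewrite !expansion_coef_detrend by lia.
  rewrite opp_IZR, <- INR_IZR_INZ, cos_coef_opp, sin_coef_opp by apply detrend_Re_cont.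
  field. lra.
Qed.

Section F0.

Hypothesis f_F0 : inF0 f.

Lemma detrend_cos_coef_Re_0 (k : Z) : cos_coef u (IZR k) = 0.
Proof.
  apply cos_coef_reflect_odd; [apply detrend_Re_cont |].
  intros t Ht. exact (proj1 (F0_detrend_reflect f t f_F0 Ht)).
Qed.

Lemma detrend_sin_coef_Im_0 (k : Z) : sin_coef v (IZR k) = 0.
Proof.
  apply sin_coef_reflect_even; [apply detrend_Im_cont |].
  intros t Ht. exact (proj2 (F0_detrend_reflect f t f_F0 Ht)).
Qed.

Lemma F0_coef_real (h : Z) : Im (f 1 + RtoC 2 * Ci * RtoC PI * RtoC (IZR h) * fhat f h)%C = 0.
Proof.
  destruct (Z.eq_dec h 0) as [-> | Hh].
  - replace (f 1 + RtoC 2 * Ci * RtoC PI * RtoC (IZR 0) * fhat f 0)%C with (f 1) by ring.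
    exact (proj2 (F0_endpoints f f_F0)).
  - rewrite fhat_detrend, Im_2iPIh_mul, fhat_detrend_parts by exact Hh.
    unfold Re. cbn [fst]. rewrite detrend_cos_coef_Re_0, detrend_sin_coef_Im_0. ring.
Qed.

Lemma coef_relations_expansion_coef : coef_relations f (expansion_coef f).
Proof.
  intros h. apply C_eq_of_Re_Im; [apply re_RtoC |]. rewrite im_RtoC, F0_coef_real. reflexivity.
Qed.

Lemma fejer_expansion_coef_Re (N : nat) (t : R) :
  Re (fejer (expansion_coef f) N t) = Re (f 1) * t + (fejer_mean u N t - fejer_mean u N 0).
Proof.
  rewrite fejer_Re, expansion_coef_0, fejer_mean_sub_at_0. f_equal. apply sum_n_m_Rext. intros m Hm.
  rewrite sin_amplitude_expansion_coef by lia. rewrite INR_IZR_INZ, detrend_cos_coef_Re_0. ring.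
Qed.

Lemma fejer_expansion_coef_Im (N : nat) (t : R) :
  Im (fejer (expansion_coef f) N t) = fejer_mean v N t - fejer_mean v N 0.
Proof.
  rewrite fejer_Im, fejer_mean_sub_at_0. apply sum_n_m_Rext. intros m Hm.
  rewrite versin_amplitude_expansion_coef by lia. rewrite INR_IZR_INZ, detrend_sin_coef_Im_0. ring.
Qed.

Theorem expansion_of_F0 : expansion f (expansion_coef f).
Proof.
  destruct (F0_endpoints f f_F0) as [Hf0 HIm1].
  assert (Hu0 : u 0 = 0) by (unfold u; rewrite Re_detrend, Hf0; cbn; ring).
  assert (Hu1 : u 1 = 0) by (unfold u; rewrite Re_detrend; ring).
  assert (Hv0 : v 0 = 0) by (unfold v; rewrite Im_detrend, Hf0; cbn; ring).
  assert (Hv1 : v 1 = 0) by (unfold v; rewrite Im_detrend; ring).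
  intros eps Heps.
  destruct (fejer_mean_uniform u detrend_Re_cont ltac:(congruence) (eps / 4) ltac:(lra)) as [Nu HNu].
  destruct (fejer_mean_uniform v detrend_Im_cont ltac:(congruence) (eps / 4) ltac:(lra)) as [Nv HNv].
  exists (Nat.max Nu Nv). intros N HN t Ht.
  assert (HRe : Re (f t - fejer (expansion_coef f) N t)%C
                = (u t - fejer_mean u N t) - (u 0 - fejer_mean u N 0)).
  { unfold Cminus. rewrite re_plus, re_opp, fejer_expansion_coef_Re, Hu0. unfold u. rewrite Re_detrend. ring. }
  assert (HIm : Im (f t - fejer (expansion_coef f) N t)%C
                = (v t - fejer_mean v N t) - (v 0 - fejer_mean v N 0)).
  { unfold Cminus. rewrite im_plus, im_opp, fejer_expansion_coef_Im, Hv0. unfold v.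
    rewrite Im_detrend, HIm1. ring. }
  assert (H0 : I01 0) by (unfold I01; lra).
  eapply Rle_lt_trans; [apply Cmod_le_Re_Im |]. rewrite HRe, HIm.
  pose proof (Rabs_sub_le (u t - fejer_mean u N t) (u 0 - fejer_mean u N 0)).
  pose proof (Rabs_sub_le (v t - fejer_mean v N t) (v 0 - fejer_mean v N 0)).
  pose proof (HNu N ltac:(lia) t Ht). pose proof (HNu N ltac:(lia) 0 H0).
  pose proof (HNv N ltac:(lia) t Ht). pose proof (HNv N ltac:(lia) 0 H0).
  lra.
Qed.

Lemma fhat_detrend_of_relations (alpha : Z -> R) (h : Z) : coef_relations f alpha -> h <> 0%Z ->
  fhat (detrend f) h = (0, - alpha h / (2 * PI * IZR h)).
Proof.
  intros Hrel Hh. pose proof (two_PI_IZR_neq0 h Hh).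
  pose proof (Hrel h) as E. rewrite fhat_detrend in E by exact Hh.
  pose proof (f_equal Re E) as ERe. pose proof (f_equal Im E) as EIm.
  rewrite re_RtoC, Re_2iPIh_mul in ERe. rewrite im_RtoC, Im_2iPIh_mul in EIm.
  apply C_eq_of_Re_Im.
  - change (Re (fhat (detrend f) h) = 0). symmetry in EIm. apply Rmult_integral in EIm. destruct EIm; [contradiction | assumption].
  - change (Im (fhat (detrend f) h) = - alpha h / (2 * PI * IZR h)). rewrite ERe. field. split; [now apply eq_IZR_contrapositive | apply PI_neq0].
Qed.

Lemma cont01_of_continuous : cont01 f.
Proof. intros t _. apply (filterlim_filter_le_1 _ (filter_le_within I01)). apply f_cont. Qed.

Theorem inS_iff_coef_bound (alpha : Z -> R) : coef_relations f alpha ->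
  (inS f <-> forall h, Rabs (alpha h) <= 2).
Proof.
  intros Hrel. destruct (F0_endpoints f f_F0) as [Hf0 HIm1].
  assert (Halpha0 : alpha 0%Z = Re (f 1)) by (rewrite (coef_relations_eq f alpha Hrel), expansion_coef_0; reflexivity).
  assert (Hg : forall h, h <> 0%Z ->
            Re (fhat (detrend f) h) = 0 /\
            (Cmod (fhat (detrend f) h) <= 1 / (PI * Rabs (IZR h)) <-> Rabs (alpha h) <= 2)).
  { intros h Hh. rewrite (fhat_detrend_of_relations alpha h Hrel Hh), Cmod_pair_0_l.
    split; [reflexivity | apply Rabs_div_2PI_le_iff, eq_IZR_contrapositive, Hh]. }
  unfold inS. fold (detrend f). split.
  - intros [_ [_ [_ [Hf1 Hh]]]] h. destruct (Z.eq_dec h 0) as [-> | Hne].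
    + rewrite Halpha0. apply Rabs_le. exact Hf1.
    + apply (Hg h Hne), (Hh h Hne).
  - intros Hb. split; [exact cont01_of_continuous | split; [exact Hf0 | split; [exact HIm1 | split]]].
    + rewrite <- Halpha0. apply Rabs_le_between, Hb.
    + intros h Hh. split; [apply (Hg h Hh) | apply (Hg h Hh), Hb].
Qed.

End F0.

End ContinuousCoefficients.

Theorem expansion_iff_coef_relations (f : R -> C) (alpha : Z -> R) :
  (forall x, continuous f x) -> inF0 f -> (expansion f alpha <-> coef_relations f alpha).
Proof.
  intros Hc HF. split.
  - intros Hexp h. rewrite (expansion_unique f alpha (expansion_coef f) Hexp (expansion_of_F0 f Hc HF) h).
    apply coef_relations_expansion_coef; assumption.
  - intros Hrel eps Heps. destruct (expansion_of_F0 f Hc HF eps Heps) as [N0 HN0].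
    exists N0. intros N HN t Ht. rewrite (fejer_ext alpha (expansion_coef f)) by exact (coef_relations_eq f alpha Hrel).
    apply HN0; assumption.
Qed.

(** * Reduction to functions continuous on R *)

Definition clamp01 (t : R) : R := Rmax 0 (Rmin 1 t).

Lemma clamp01_I01 (t : R) : I01 (clamp01 t).
Proof. unfold I01, clamp01, Rmax, Rmin. repeat destruct Rle_dec; lra. Qed.

Lemma clamp01_id (t : R) : I01 t -> clamp01 t = t.
Proof. unfold I01, clamp01, Rmax, Rmin. intros. repeat destruct Rle_dec; lra. Qed.

Lemma clamp01_lipschitz (a b : R) : Rabs (clamp01 a - clamp01 b) <= Rabs (a - b).
Proof. unfold clamp01, Rmax, Rmin. repeat destruct Rle_dec; unfold Rabs; repeat destruct Rcase_abs; lra. Qed.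

Lemma continuous_clamp01_comp (f : R -> C) : cont01 f -> forall x, continuous (fun t => f (clamp01 t)) x.
Proof.
  intros Hf x. apply (filterlim_comp _ _ _ clamp01 f _ (within I01 (locally (clamp01 x)))).
  - intros P [eps Heps]. exists eps. intros y Hy. apply Heps; [| apply clamp01_I01].
    change (Rabs (clamp01 y - clamp01 x) < eps). change (Rabs (y - x) < eps) in Hy.
    eapply Rle_lt_trans; [apply clamp01_lipschitz | exact Hy].
  - apply Hf, clamp01_I01.
Qed.

Lemma fhat_ext01 (f g : R -> C) (h : Z) : (forall t, I01 t -> f t = g t) -> fhat f h = fhat g h.
Proof.
  intros Hfg. unfold fhat. apply (RInt_ext (V := C_R_CompleteNormedModule)). intros x Hx.
  rewrite Rmin_left, Rmax_right in Hx by lra. rewrite Hfg by (unfold I01; lra). reflexivity.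
Qed.

Section Agree.

Variables f F : R -> C.
Hypothesis agree : forall t, I01 t -> f t = F t.
Let agree0 : f 0 = F 0 := agree 0 (conj (Rle_refl 0) Rle_0_1).
Let agree1 : f 1 = F 1 := agree 1 (conj Rle_0_1 (Rle_refl 1)).

Lemma inF0_agree : inF0 f <-> inF0 F.
Proof.
  split; intros H t Ht; assert (Ht' : I01 (1 - t)) by (unfold I01 in *; lra); specialize (H t Ht).
  - rewrite <- (agree t Ht), <- (agree _ Ht'), <- agree1. exact H.
  - rewrite (agree t Ht), (agree _ Ht'), agree1. exact H.
Qed.

Lemma expansion_agree (alpha : Z -> R) : expansion f alpha <-> expansion F alpha.
Proof.
  split; intros H eps Heps; destruct (H eps Heps) as [N0 HN0]; exists N0; intros N HN t Ht;
    specialize (HN0 N HN t Ht); [rewrite <- (agree t Ht) | rewrite (agree t Ht)]; exact HN0.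
Qed.

Lemma coef_relations_agree (alpha : Z -> R) : coef_relations f alpha <-> coef_relations F alpha.
Proof.
  unfold coef_relations. rewrite agree1.
  split; intros H h; rewrite (H h), (fhat_ext01 f F h agree); reflexivity.
Qed.

Lemma inS_agree : inS f <-> inS F.
Proof.
  assert (Hcont : cont01 f <-> cont01 F).
  { split; intros H t Ht.
    - rewrite <- (agree t Ht). apply (filterlim_within_ext I01 f F); [exact agree | apply H, Ht].
    - rewrite (agree t Ht). apply (filterlim_within_ext I01 F f); [| apply H, Ht].
      intros x Hx. symmetry. apply agree, Hx. }
  assert (Hg : forall h, fhat (detrend f) h = fhat (detrend F) h).
  { intros h. apply fhat_ext01. intros t Ht. unfold detrend. rewrite (agree t Ht), agree1. reflexivity. }
  unfold inS. fold (detrend f) (detrend F). rewrite Hcont, agree0, agree1.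
  split; intros [H1 [H2 [H3 [H4 H5]]]]; (do 4 (split; [assumption |])); intros h Hh;
    specialize (H5 h Hh); cbv zeta in *; rewrite Hg in *; exact H5.
Qed.

End Agree.

Theorem lemma3p1 (f : R -> C) (Hf : cont01 f) :
  (inF0 f <-> exists alpha : Z -> R, expansion f alpha) /\
  (inF0 f -> forall alpha : Z -> R,
     expansion f alpha <->
     (RtoC (alpha 0%Z) = f 1 /\
      forall h : Z, h <> 0%Z ->
        RtoC (alpha h) = (f 1 + RtoC 2 * Ci * RtoC PI * RtoC (IZR h) * fhat f h)%C)) /\
  (inF0 f -> forall alpha : Z -> R,
     RtoC (alpha 0%Z) = f 1 ->
     (forall h : Z, h <> 0%Z ->
        RtoC (alpha h) = (f 1 + RtoC 2 * Ci * RtoC PI * RtoC (IZR h) * fhat f h)%C) ->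
     (inS f <-> forall h : Z, Rabs (alpha h) <= 2)).
Proof.
  set (F := fun t => f (clamp01 t)).
  assert (Hagree : forall t, I01 t -> f t = F t) by (intros t Ht; unfold F; rewrite clamp01_id by exact Ht; reflexivity).
  pose proof (continuous_clamp01_comp f Hf) as HF.
  assert (HF0 : inF0 f -> inF0 F) by apply (inF0_agree f F Hagree).
  split; [| split].
  - split.
    + intros H0. exists (expansion_coef F). apply (expansion_agree f F Hagree), expansion_of_F0; auto.
    + intros [alpha Hexp]. exact (expansion_F0 f alpha Hexp).
  - intros H0 alpha. rewrite <- coef_relations_iff, (expansion_agree f F Hagree), (coef_relations_agree f F Hagree).
    apply expansion_iff_coef_relations; auto.
  - intros H0 alpha Halpha0 Halpha. rewrite (inS_agree f F Hagree).
    apply inS_iff_coef_bound; auto.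
    apply (coef_relations_agree f F Hagree), coef_relations_iff. split; assumption.
Qed.
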